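(* Let $d>k\geq1$, let $A\in\mathbb{R}^{d\times d}$ be symmetric positive semidefinite with $\lambda_k>\lambda_{k+1}$, let $\beta>0$ with $\lambda_k>2\sqrt\beta\geq\lambda_{k+1}$, and let $X_0\in\mathrm{St}(d,k)$ with $\cos\theta_k(U_k,X_0)>0$. Consider ANPM with momentum $\beta$ and perturbations $(\Xi_t)$ such that, for all $t\geq0$, $\|U_k^\top\Xi_t\|_2\leq c(\lambda_k-2\sqrt\beta)\cos\theta_k(U_k,X_t)$ with $c=1/32$. Then for all $t\geq0$: $U_k^\top X_t$ is invertible (so $E_t$ is well defined), $G_t$ is well defined, $U_k^\top Y_{t+1}$ and $Y_{t+1}$ have rank $k$, $\|G_t\|_2\leq\frac{1}{1/2-c\Delta}$, $$G_t=\big(I_k-\beta\Lambda_k^{-1}(U_k^\top X_{t-1})(U_k^\top X_tR_t)^{-1}+E_t\big)^{-1},$$ where $X_{-1}:=\frac{1}{2\beta}AX_0$ and $R_0:=I_k$, and $U_k^\top Y_{t+1}=\Lambda_kG_t^{-1}(U_k^\top X_t)$.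
   Context: $A$ has eigenvalues $\lambda_1\geq\dots\geq\lambda_d\geq0$, orthonormal eigenvectors $u_i$; $U_k:=[u_1,\dots,u_k]$, $\Lambda_k:=\mathrm{diag}(\lambda_1,\dots,\lambda_k)$. $\Delta:=(\lambda_k-2\sqrt\beta)/\lambda_k$. $\mathrm{St}(d,k)$, $\mathrm{QR}$, $\theta_k(U,X):=\arccos\sigma_{\min}(U^\top X)$ as usual (QR: $Y=XR$, $X^\top X=I_k$, $R$ upper triangular with nonnegative diagonal). ANPM: $Y_1:=\tfrac12AX_0+\Xi_0$, $(X_1,R_1)=\mathrm{QR}(Y_1)$; for $t\geq1$, $Y_{t+1}=AX_t-\beta X_{t-1}R_t^{-1}+\Xi_t$, $(X_{t+1},R_{t+1})=\mathrm{QR}(Y_{t+1})$. $E_t:=\Lambda_k^{-1}(U_k^\top\Xi_t)(U_k^\top X_t)^{-1}$; $G_0:=(I_k/2+E_0)^{-1}$, $G_{t+1}:=(I_k-\beta\Lambda_k^{-1}G_t\Lambda_k^{-1}+E_{t+1})^{-1}$. *)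

From mathcomp Require Import all_boot all_order all_algebra.
From mathcomp Require Import all_classical all_reals.
From mathcomp Require Import trigo.
Set Implicit Arguments. Unset Strict Implicit. Unset Printing Implicit Defensive.
Import Order.TTheory GRing.Theory Num.Theory.
Local Open Scope ring_scope.
Local Open Scope classical_set_scope.

Section Defs.
Variable R : realType.

Definition vnorm n (v : 'cV[R]_n) : R := Num.sqrt (\sum_i (v i 0) ^+ 2).

Definition specnorm m n (M : 'M[R]_(m, n)) : R :=
  sup [set vnorm (M *m v) | v in [set v : 'cV[R]_n | vnorm v = 1]].

Definition sigma_min n (M : 'M[R]_n) : R :=
  inf [set vnorm (M *m v) | v in [set v : 'cV[R]_n | vnorm v = 1]].

Definition theta_k d k (U X : 'M[R]_(d, k)) : R := acos (sigma_min (U^T *m X)).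

Definition stiefel d k (X : 'M[R]_(d, k)) : Prop := X^T *m X = 1%:M.

Definition upper_tri k (M : 'M[R]_k) : Prop :=
  forall i j : 'I_k, (j < i)%N -> M i j = 0.

Definition is_QR d k (Y X : 'M[R]_(d, k)) (Rm : 'M[R]_k) : Prop :=
  [/\ Y = X *m Rm, stiefel X, upper_tri Rm & forall i, 0 <= Rm i i].

End Defs.

(* Write M_t := Uk^T X_t.  Since Uk^T A = Lk Uk^T, projecting the ANPM recursion onto Uk
   gives Uk^T Y_(t+1) = Lk G_t^-1 M_t, and the QR step Y_(t+1) = X_(t+1) R_(t+1) turns this
   into M_t = G_t Lk^-1 M_(t+1) R_(t+1).  Hence invertibility passes from M_t and G_t^-1 to
   M_(t+1) and R_(t+1), and the same identity puts the recursion for G_t in momentum form.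
   The quantitative core is the lower bound |G_t^-1 v| >= (1/2 - c Delta) |v|, proved by
   induction: |E_t v| <= c Delta |v| because ||Uk^T Xi_t|| <= c (lamk - 2 sqrt beta)
   sigma_min(M_t), and the momentum term beta Lk^-1 G_(t-1) Lk^-1 has norm at most
   beta / (lamk^2 (1/2 - c Delta)) <= 1/2, which holds for every c <= 1/2 once
   2 sqrt beta < lamk. *)

From mathcomp Require Import all_boot all_order all_algebra.
From mathcomp Require Import all_classical all_reals.
From mathcomp Require Import trigo.
From mathcomp Require Import ring lra.
Set Implicit Arguments. Unset Strict Implicit. Unset Printing Implicit Defensive.
Import Order.TTheory GRing.Theory Num.Theory.
Local Open Scope ring_scope.

Section VectorNorm.
Variable R : realType.

Lemma sum_mul_sqr_le n (f g : 'I_n -> R) :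
  (\sum_i f i * g i) ^+ 2 <= (\sum_i f i ^+ 2) * (\sum_i g i ^+ 2).
Proof.
set S := \sum_i _; set A := \sum_i f i ^+ 2; set B := \sum_i g i ^+ 2.
have eAB : A * B = \sum_i \sum_j f i ^+ 2 * g j ^+ 2.
  by rewrite mulr_suml; apply: eq_bigr => i _; rewrite mulr_sumr.
have eS : S ^+ 2 = \sum_i \sum_j f i * g i * (f j * g j).
  by rewrite expr2 mulr_suml; apply: eq_bigr => i _; rewrite mulr_sumr.
have eBA : A * B = \sum_i \sum_j f j ^+ 2 * g i ^+ 2 by rewrite eAB exchange_big.
have lagrange : A * B + A * B - 2 * S ^+ 2 = \sum_i \sum_j (f i * g j - f j * g i) ^+ 2.
  rewrite {1}eAB eBA eS mulr_sumr -big_split -sumrB /=.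
  apply: eq_bigr => i _; rewrite mulr_sumr -big_split -sumrB /=.
  by apply: eq_bigr => j _; ring.
have : 0 <= \sum_i \sum_j (f i * g j - f j * g i) ^+ 2.
  by apply: sumr_ge0 => i _; apply: sumr_ge0 => j _; apply: sqr_ge0.
rewrite -lagrange; lra.
Qed.

Lemma vnorm_ge0 n (v : 'cV[R]_n) : 0 <= vnorm v.
Proof. exact: sqrtr_ge0. Qed.

Lemma vnorm_sqr n (v : 'cV[R]_n) : vnorm v ^+ 2 = \sum_i v i 0 ^+ 2.
Proof. by rewrite sqr_sqrtr // sumr_ge0 // => i _; apply: sqr_ge0. Qed.

Lemma vnorm_eq0 n (v : 'cV[R]_n) : vnorm v = 0 -> v = 0.
Proof.
move=> v0; have /eqP : \sum_i v i 0 ^+ 2 = 0 by rewrite -vnorm_sqr v0 expr0n.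
rewrite psumr_eq0 => [/allP vi0|i _]; last exact: sqr_ge0.
apply/matrixP => i j; rewrite (ord1 j) mxE.
by apply/eqP; rewrite -sqrf_eq0; apply: implyP (vi0 i (mem_index_enum _)) _.
Qed.

Lemma vnormZ n a (v : 'cV[R]_n) : vnorm (a *: v) = `|a| * vnorm v.
Proof.
rewrite /vnorm -sqrtr_sqr -sqrtrM ?sqr_ge0 // mulr_sumr.
by congr Num.sqrt; apply: eq_bigr => i _; rewrite mxE exprMn.
Qed.

Lemma vnorm0 n : vnorm (0 : 'cV[R]_n) = 0.
Proof. by rewrite -(scale0r 0) vnormZ normr0 mul0r. Qed.

Lemma vnormN n (v : 'cV[R]_n) : vnorm (- v) = vnorm v.
Proof. by rewrite -scaleN1r vnormZ normrN normr1 mul1r. Qed.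

Lemma ler_vnormD n (u v : 'cV[R]_n) : vnorm (u + v) <= vnorm u + vnorm v.
Proof.
rewrite -(ler_pXn2r (_ : 0 < 2)%N) ?nnegrE ?addr_ge0 ?vnorm_ge0 //.
have cs : \sum_i u i 0 * v i 0 <= vnorm u * vnorm v.
  apply: le_trans (ler_norm _) _.
  rewrite -(ler_pXn2r (_ : 0 < 2)%N) ?nnegrE ?mulr_ge0 ?vnorm_ge0 //.
  by rewrite real_normK ?num_real // exprMn !vnorm_sqr sum_mul_sqr_le.
have -> : vnorm (u + v) ^+ 2 = vnorm u ^+ 2 + vnorm v ^+ 2 + 2 * \sum_i u i 0 * v i 0.
  rewrite !vnorm_sqr mulr_sumr -!big_split /=.
  by apply: eq_bigr => i _; rewrite mxE; ring.
rewrite sqrrD; lra.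
Qed.

Lemma lerB_vnormD n (u v : 'cV[R]_n) : vnorm u - vnorm v <= vnorm (u + v).
Proof. by have := ler_vnormD (u + v) (- v); rewrite vnormN addrK; lra. Qed.

Lemma vnorm_mulmx_le m n (M : 'M[R]_(m, n)) v :
  vnorm (M *m v) <= Num.sqrt (\sum_i \sum_j M i j ^+ 2) * vnorm v.
Proof.
rewrite -(ler_pXn2r (_ : 0 < 2)%N) ?nnegrE ?mulr_ge0 ?vnorm_ge0 ?sqrtr_ge0 //.
rewrite exprMn !vnorm_sqr sqr_sqrtr; last first.
  by apply: sumr_ge0 => i _; apply: sumr_ge0 => j _; apply: sqr_ge0.
rewrite mulr_suml; apply: ler_sum => i _; rewrite mxE.
exact: sum_mul_sqr_le.
Qed.

Lemma vnorm_delta n : vnorm (delta_mx 0 0 : 'cV[R]_n.+1) = 1.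
Proof.
rewrite /vnorm (bigD1 ord0) //= big1 => [|i /negPf i0]; last first.
  by rewrite mxE i0 expr0n.
by rewrite mxE !eqxx expr1n addr0 sqrtr1.
Qed.

Lemma vnorm_normalize n (v : 'cV[R]_n) : vnorm v != 0 -> vnorm ((vnorm v)^-1 *: v) = 1.
Proof. by move=> v0; rewrite vnormZ ger0_norm ?invr_ge0 ?vnorm_ge0 // mulVf. Qed.

End VectorNorm.

Section SingularValueBounds.
Variable R : realType.

Local Notation sphere_image M n :=
  [set vnorm (M *m u) | u in [set u : 'cV[R]_n | vnorm u = 1]]%classic.

Lemma sphere_image_neq0 m n (M : 'M[R]_(m, n.+1)) : (sphere_image M n.+1 !=set0)%classic.
Proof. by exists (vnorm (M *m delta_mx 0 0)), (delta_mx 0 0); rewrite //= vnorm_delta. Qed.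

Lemma sphere_image_normalize m n (M : 'M[R]_(m, n)) v : vnorm v != 0 ->
  sphere_image M n (vnorm (M *m v) / vnorm v).
Proof.
move=> v0; exists ((vnorm v)^-1 *: v); first exact: vnorm_normalize.
by rewrite -scalemxAr vnormZ ger0_norm ?invr_ge0 ?vnorm_ge0 // mulrC.
Qed.

Lemma specnorm_mulmx_le m n (M : 'M[R]_(m, n.+1)) v :
  vnorm (M *m v) <= specnorm M * vnorm v.
Proof.
have [v0|v0] := eqVneq (vnorm v) 0.
  by rewrite v0 mulr0 (vnorm_eq0 v0) mulmx0 vnorm0.
have bounded : has_sup (sphere_image M n.+1).
  split; first exact: sphere_image_neq0.
  exists (Num.sqrt (\sum_i \sum_j M i j ^+ 2)) => _ [u /= u1 <-].
  by have := vnorm_mulmx_le M u; rewrite u1 mulr1.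
have := sup_upper_bound bounded (sphere_image_normalize M v0).
by rewrite ler_pdivrMr // lt_neqAle eq_sym v0 vnorm_ge0.
Qed.

Lemma specnorm_le m n (M : 'M[R]_(m, n.+1)) b :
  (forall v, vnorm (M *m v) <= b * vnorm v) -> specnorm M <= b.
Proof.
move=> Mb; apply: ge_sup; first exact: sphere_image_neq0.
by move=> _ [u /= u1 <-]; have := Mb u; rewrite u1 mulr1.
Qed.

Lemma sigma_min_mulmx_ge n (M : 'M[R]_n.+1) v :
  sigma_min M * vnorm v <= vnorm (M *m v).
Proof.
have [v0|v0] := eqVneq (vnorm v) 0; first by rewrite v0 mulr0 vnorm_ge0.
have bounded : has_lbound (sphere_image M n.+1) by exists 0 => _ [u _ <-]; apply: vnorm_ge0.
have := ge_inf bounded (sphere_image_normalize M v0).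
by rewrite ler_pdivlMr // lt_neqAle eq_sym v0 vnorm_ge0.
Qed.

Lemma sigma_min_ge0 n (M : 'M[R]_n.+1) : 0 <= sigma_min M.
Proof.
apply: lb_le_inf; first exact: sphere_image_neq0.
by move=> _ [u _ <-]; apply: vnorm_ge0.
Qed.

Lemma cos_theta_k_le d k (U X : 'M[R]_(d, k.+1)) :
  cos (theta_k U X) <= sigma_min (U^T *m X).
Proof.
have s0 := sigma_min_ge0 (U^T *m X).
have [s1|/ltW s1] := leP (sigma_min (U^T *m X)) 1; last exact: le_trans (cos_le1 _) s1.
by rewrite /theta_k acosK // in_itv /= s1 andbT (le_trans _ s0) // lerN10.
Qed.

Lemma injective_unitmx n (M : 'M[R]_n) :
  (forall v : 'cV_n, M *m v = 0 -> v = 0) -> M \in unitmx.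
Proof.
move=> Minj; rewrite unitmxE unitfE -det_tr; apply/negP => /det0P [v v0 vM].
have /(congr1 trmx) : v^T = 0 by apply: Minj; rewrite -[M]trmxK -trmx_mul vM trmx0.
by rewrite trmxK trmx0 => v_eq0; rewrite v_eq0 eqxx in v0.
Qed.

Section LowerBound.
Variables (n : nat) (M : 'M[R]_n) (a : R).
Hypothesis a_gt0 : 0 < a.
Hypothesis M_ge : forall v, a * vnorm v <= vnorm (M *m v).

Lemma lbound_unitmx : M \in unitmx.
Proof.
apply: injective_unitmx => v Mv0; apply: vnorm_eq0; apply/eqP.
have := M_ge v; rewrite Mv0 vnorm0 pmulr_rle0 // => v_le0.
by rewrite eq_le v_le0 vnorm_ge0.
Qed.

Lemma lbound_invmx_le w : vnorm (invmx M *m w) <= a^-1 * vnorm w.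
Proof.
by rewrite ler_pdivlMl // (le_trans (M_ge _)) // mulmxA mulmxV ?lbound_unitmx ?mul1mx.
Qed.

End LowerBound.

Lemma diag_mx_lbound n (l : 'rV[R]_n) a : 0 <= a -> (forall i, a <= l 0 i) ->
  forall v, a * vnorm v <= vnorm (diag_mx l *m v).
Proof.
move=> a0 al v.
rewrite -(ler_pXn2r (_ : 0 < 2)%N) ?nnegrE ?mulr_ge0 ?vnorm_ge0 //.
rewrite exprMn !vnorm_sqr mulr_sumr; apply: ler_sum => i _.
rewrite mul_diag_mx mxE exprMn ler_wpM2r ?sqr_ge0 // ler_pXn2r ?nnegrE //.
exact: le_trans (al i).
Qed.

End SingularValueBounds.

Lemma eigencols_trmx_mulmx (R : realType) d n (A : 'M[R]_d) (V : 'M[R]_(d, n)) (l : 'rV[R]_n) :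
  A^T = A -> (forall j, A *m col j V = l 0 j *: col j V) ->
  V^T *m A = diag_mx l *m V^T.
Proof.
move=> Asym AV; have AVe : A *m V = V *m diag_mx l.
  apply/matrixP => r j; rewrite mul_mx_diag !mxE mulrC.
  have := congr1 (fun w : 'cV_d => w r 0) (AV j); rewrite !mxE => <-.
  by apply: eq_bigr => i _; rewrite !mxE.
by rewrite -Asym -trmx_mul AVe trmx_mul tr_diag_mx.
Qed.

Section ANPM.
Variables (R : realType) (d k : nat).
Variables (A : 'M[R]_d) (Uk : 'M[R]_(d, k.+1)) (lams : 'rV[R]_k.+1) (lamk beta c : R).
Variables (X Y Xi : nat -> 'M[R]_(d, k.+1)) (Rq : nat -> 'M[R]_k.+1).
Local Notation Lk := (diag_mx lams).

Hypothesis UkA : Uk^T *m A = Lk *m Uk^T.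
Hypothesis lamk_le : forall i, lamk <= lams 0 i.
Hypothesis beta_gt0 : 0 < beta.
Hypothesis lamk_gt : 2 * Num.sqrt beta < lamk.
Hypothesis c_ge0 : 0 <= c.
Hypothesis c_le : c <= 2^-1.
Hypothesis cos_X0 : 0 < cos (theta_k Uk (X 0)).
Hypothesis Y1 : Y 1 = 2^-1 *: (A *m X 0) + Xi 0.
Hypothesis YS : forall t, (1 <= t)%N ->
  Y t.+1 = A *m X t - beta *: (X t.-1 *m invmx (Rq t)) + Xi t.
Hypothesis QR : forall t, (1 <= t)%N -> is_QR (Y t) (X t) (Rq t).
Hypothesis Xi_small : forall t,
  specnorm (Uk^T *m Xi t) <= c * (lamk - 2 * Num.sqrt beta) * cos (theta_k Uk (X t)).

Definition anpm_Delta := (lamk - 2 * Num.sqrt beta) / lamk.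

Definition anpm_E t := invmx Lk *m (Uk^T *m Xi t) *m invmx (Uk^T *m X t).

Fixpoint anpm_Ginv t := match t with
  | 0 => 2^-1%:M + anpm_E 0
  | t.+1 => 1%:M - beta *: (invmx Lk *m invmx (anpm_Ginv t) *m invmx Lk) + anpm_E t.+1
  end.

Definition anpm_Xprev t := match t with 0 => (2 * beta)^-1 *: (A *m X 0) | t.+1 => X t end.

Definition anpm_Rcur t := match t with 0 => 1%:M | t.+1 => Rq t.+1 end.

Local Notation margin := (2^-1 - c * anpm_Delta).

Lemma lamk_gt0 : 0 < lamk.
Proof. by apply: le_lt_trans lamk_gt; rewrite mulr_ge0 ?sqrtr_ge0. Qed.

Lemma margin_gt0 : 0 < margin.
Proof.
have Delta_lt1 : anpm_Delta < 1.
  by rewrite ltr_pdivrMr ?lamk_gt0 // mul1r gtrBl mulr_gt0 ?sqrtr_gt0.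
have Delta_ge0 : 0 <= anpm_Delta by rewrite divr_ge0 ?subr_ge0 ?ltW ?lamk_gt0.
have : c * anpm_Delta <= 2^-1 * anpm_Delta by rewrite ler_wpM2r.
lra.
Qed.

(* Equivalent to [(l + 2 q - 2 c l) (l - 2 q) >= 0] for [q = sqrt beta] and [l = lamk]. *)
Lemma beta_le_margin : beta <= lamk ^+ 2 * margin / 2.
Proof.
have l0 := lamk_gt0; have q0 := sqrtr_ge0 beta.
have lq := lamk_gt.
rewrite -[X in X <= _](sqr_sqrtr (ltW beta_gt0)) /anpm_Delta.
have -> : lamk ^+ 2 * (2^-1 - c * ((lamk - 2 * Num.sqrt beta) / lamk)) / 2
    = lamk ^+ 2 / 4 - c * lamk * (lamk - 2 * Num.sqrt beta) / 2.
  by field; rewrite gt_eqF.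
have cl : c * lamk <= 2^-1 * lamk by rewrite ler_pM2r.
have : 0 <= (lamk + 2 * Num.sqrt beta - 2 * c * lamk) * (lamk - 2 * Num.sqrt beta).
  by apply: mulr_ge0; lra.
lra.
Qed.

Lemma Lk_ge v : lamk * vnorm v <= vnorm (Lk *m v).
Proof. exact: diag_mx_lbound (ltW lamk_gt0) lamk_le v. Qed.

Lemma invLk_le u : vnorm (invmx Lk *m u) <= lamk^-1 * vnorm u.
Proof. exact: lbound_invmx_le lamk_gt0 Lk_ge u. Qed.

Lemma Lk_unit : Lk \in unitmx.
Proof. exact: lbound_unitmx lamk_gt0 Lk_ge. Qed.

Lemma UkX0_unit : Uk^T *m X 0 \in unitmx.
Proof.
apply: (@lbound_unitmx _ _ _ (sigma_min (Uk^T *m X 0))); last exact: sigma_min_mulmx_ge.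
exact: lt_le_trans cos_X0 (cos_theta_k_le _ _).
Qed.

Lemma mulmx_Lk_E t : Uk^T *m X t \in unitmx ->
  Lk *m anpm_E t *m (Uk^T *m X t) = Uk^T *m Xi t.
Proof. by move=> Mu; rewrite /anpm_E (mulmxA Lk) mulmxKV // mulKVmx ?Lk_unit. Qed.

Lemma anpm_E_le t v : Uk^T *m X t \in unitmx ->
  vnorm (anpm_E t *m v) <= c * anpm_Delta * vnorm v.
Proof.
move=> Mu; set M := Uk^T *m X t; set w := invmx M *m v.
have -> : anpm_E t *m v = invmx Lk *m (Uk^T *m Xi t *m w) by rewrite /anpm_E !mulmxA.
have K0 : 0 <= c * (lamk - 2 * Num.sqrt beta) by rewrite mulr_ge0 // subr_ge0 ltW.
have Mw : sigma_min M * vnorm w <= vnorm v.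
  by have := sigma_min_mulmx_ge M w; rewrite /w mulmxA mulmxV // mul1mx.
have Xiw : vnorm (Uk^T *m Xi t *m w) <= c * (lamk - 2 * Num.sqrt beta) * vnorm v.
  apply: le_trans (specnorm_mulmx_le _ w) _.
  apply: (@le_trans _ _ (c * (lamk - 2 * Num.sqrt beta) * sigma_min M * vnorm w)).
    by rewrite ler_wpM2r ?vnorm_ge0 // (le_trans (Xi_small t)) // ler_wpM2l ?cos_theta_k_le.
  by rewrite -mulrA ler_wpM2l.
apply: le_trans (invLk_le _) _.
have -> : c * anpm_Delta * vnorm v = lamk^-1 * (c * (lamk - 2 * Num.sqrt beta) * vnorm v).
  by rewrite /anpm_Delta; ring.
by rewrite ler_wpM2l // invr_ge0 ltW ?lamk_gt0.
Qed.

Lemma anpm_Ginv0_ge v : margin * vnorm v <= vnorm (anpm_Ginv 0 *m v).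
Proof.
have := lerB_vnormD (2^-1 *: v) (anpm_E 0 *m v).
rewrite /= mulmxDl mul_scalar_mx vnormZ ger0_norm ?invr_ge0 //.
have := anpm_E_le v UkX0_unit; lra.
Qed.

Lemma anpm_GinvS_ge t : Uk^T *m X t.+1 \in unitmx ->
    (forall v, margin * vnorm v <= vnorm (anpm_Ginv t *m v)) ->
  forall v, margin * vnorm v <= vnorm (anpm_Ginv t.+1 *m v).
Proof.
move=> Mu Gge v; set W := invmx Lk *m (invmx (anpm_Ginv t) *m (invmx Lk *m v)).
have -> : anpm_Ginv t.+1 *m v = v - beta *: W + anpm_E t.+1 *m v.
  by rewrite /= /W mulmxDl mulmxBl mul1mx -scalemxAl !mulmxA.
have l0 := lamk_gt0; have a0 := margin_gt0.
have W_le : vnorm W <= lamk^-1 * (margin^-1 * (lamk^-1 * vnorm v)).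
  apply: le_trans (invLk_le _) _; rewrite ler_pM2l ?invr_gt0 //.
  apply: le_trans (lbound_invmx_le a0 Gge _) _; rewrite ler_pM2l ?invr_gt0 //.
  exact: invLk_le.
have bW : beta * vnorm W <= 2^-1 * vnorm v.
  apply: le_trans (ler_wpM2l (ltW beta_gt0) W_le) _.
  have -> : beta * (lamk^-1 * (margin^-1 * (lamk^-1 * vnorm v)))
      = beta / (lamk ^+ 2 * margin) * vnorm v.
    by rewrite invfM expr2 invfM; ring.
  rewrite ler_wpM2r ?vnorm_ge0 // ler_pdivrMr ?mulr_gt0 ?exprn_gt0 //.
  by have := beta_le_margin; lra.
have := lerB_vnormD (v - beta *: W) (anpm_E t.+1 *m v).
have := lerB_vnormD v (- (beta *: W)); rewrite vnormN vnormZ gtr0_norm //.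
have := anpm_E_le v Mu; lra.
Qed.

Lemma anpm_UkY1 : Uk^T *m Y 1 = Lk *m anpm_Ginv 0 *m (Uk^T *m X 0).
Proof.
rewrite Y1 mulmxDr -scalemxAr (mulmxA Uk^T) UkA -mulmxA /= mulmxDr mulmxDl mulmx_Lk_E ?UkX0_unit //.
by rewrite mul_mx_scalar -scalemxAl.
Qed.

Lemma anpm_QR_step t : anpm_Ginv t \in unitmx -> Uk^T *m X t \in unitmx ->
    Uk^T *m Y t.+1 = Lk *m anpm_Ginv t *m (Uk^T *m X t) ->
  [/\ Uk^T *m X t.+1 \in unitmx, Rq t.+1 \in unitmx &
      Uk^T *m X t = invmx (anpm_Ginv t) *m invmx Lk *m (Uk^T *m X t.+1 *m Rq t.+1)].
Proof.
move=> Gu Mu UkY; have [Yq _ _ _] := @QR t.+1 isT.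
have UkYq : Uk^T *m Y t.+1 = Uk^T *m X t.+1 *m Rq t.+1 by rewrite Yq mulmxA.
have : Uk^T *m Y t.+1 \in unitmx by rewrite UkY !unitmx_mul Lk_unit Gu Mu.
rewrite UkYq unitmx_mul => /andP [Mu' Ru]; split => //.
by rewrite -UkYq UkY -!mulmxA (mulKmx Lk_unit) (mulKmx Gu).
Qed.

Lemma anpm_UkY_succ t : Uk^T *m X t.+1 \in unitmx -> Rq t.+1 \in unitmx ->
    Uk^T *m X t = invmx (anpm_Ginv t) *m invmx Lk *m (Uk^T *m X t.+1 *m Rq t.+1) ->
  Uk^T *m Y t.+2 = Lk *m anpm_Ginv t.+1 *m (Uk^T *m X t.+1).
Proof.
move=> Mu Ru UkX; rewrite YS //= !(mulmxDr, mulmxN, mulmxDl, mulNmx) mulmx_Lk_E //.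
congr (_ - _ + _); first by rewrite mulmx1 mulmxA UkA -mulmxA.
rewrite -!scalemxAr -scalemxAl; congr (_ *: _).
by rewrite mulmxA UkX !mulmxA mulmxK // mulmxV ?Lk_unit // mul1mx.
Qed.

Lemma anpm_invariant t :
  [/\ Uk^T *m X t \in unitmx, anpm_Ginv t \in unitmx,
      forall v, margin * vnorm v <= vnorm (anpm_Ginv t *m v) &
      Uk^T *m Y t.+1 = Lk *m anpm_Ginv t *m (Uk^T *m X t)].
Proof.
elim: t => [|t [Mu Gu Gge UkY]].
  split; [exact: UkX0_unit | exact: lbound_unitmx margin_gt0 anpm_Ginv0_ge |
          exact: anpm_Ginv0_ge | exact: anpm_UkY1].
have [Mu' Ru UkX] := anpm_QR_step Gu Mu UkY.
have Gge' := anpm_GinvS_ge Mu' Gge.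
by split => //; [exact: lbound_unitmx margin_gt0 Gge' | exact: anpm_UkY_succ].
Qed.

Lemma anpm_Ginv_momentum t :
  anpm_Ginv t = 1%:M - beta *: (invmx Lk *m (Uk^T *m anpm_Xprev t)
                                *m invmx (Uk^T *m X t *m anpm_Rcur t)) + anpm_E t.
Proof.
case: t => [|t] /=.
  have Mu := UkX0_unit.
  rewrite mulmx1 -(scalemxAr _ Uk^T) (mulmxA Uk^T) UkA -(mulmxA Lk) -scalemxAr mulKmx ?Lk_unit //.
  rewrite -scalemxAl mulmxV // scalerA scalemx1 -raddfB /=.
  by congr (_%:M + _); field; rewrite gt_eqF.
have [Mt Gu _ UkY] := anpm_invariant t.
have [Mu Ru ->] := anpm_QR_step Gu Mt UkY.
have MRu : Uk^T *m X t.+1 *m Rq t.+1 \in unitmx by rewrite unitmx_mul Mu Ru.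
by rewrite (mulmxA (invmx Lk)) mulmxK // mulmxA.
Qed.

Lemma anpm_properties t :
  [/\ Uk^T *m X t \in unitmx, anpm_Ginv t \in unitmx,
      \rank (Uk^T *m Y t.+1) = k.+1, \rank (Y t.+1) = k.+1 &
   [/\ specnorm (invmx (anpm_Ginv t)) <= 1 / margin,
       invmx (anpm_Ginv t) = invmx (1%:M - beta *: (invmx Lk *m (Uk^T *m anpm_Xprev t)
         *m invmx (Uk^T *m X t *m anpm_Rcur t)) + anpm_E t)
     & Uk^T *m Y t.+1 = Lk *m invmx (invmx (anpm_Ginv t)) *m (Uk^T *m X t)]].
Proof.
have [Mu Gu Gge UkY] := anpm_invariant t.
have rk : \rank (Uk^T *m Y t.+1) = k.+1.
  by apply: mxrank_unit; rewrite UkY !unitmx_mul Lk_unit Gu Mu.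
split=> //.
  by apply/eqP; rewrite eqn_leq rank_leq_col -{1}rk mxrankM_maxr.
split; [|by rewrite -anpm_Ginv_momentum | by rewrite invmxK].
by apply: specnorm_le => v; rewrite div1r; apply: lbound_invmx_le margin_gt0 Gge v.
Qed.

End ANPM.

(* Paper's k is k'.+1 and paper's d is k'.+1 + m'.+1 (so d > k >= 1).
   U_k = lsubmx U, Lambda_k = diag(lam_1..lam_k), lambda_k = lam (lshift _ ord_max),
   lambda_{k+1} = lam (rshift _ ord0). *)
Theorem proposition6 (R : realType) (k' m' : nat)
  (A U : 'M[R]_(k'.+1 + m'.+1)) (lam : 'I_(k'.+1 + m'.+1) -> R) (beta : R)
  (X Y Xi : nat -> 'M[R]_(k'.+1 + m'.+1, k'.+1)) (Rq : nat -> 'M[R]_k'.+1) :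
  let Uk : 'M[R]_(k'.+1 + m'.+1, k'.+1) := lsubmx U in
  let Lk : 'M[R]_k'.+1 := diag_mx (\row_i lam (lshift m'.+1 i)) in
  let lamk := lam (lshift m'.+1 ord_max) in
  let lamk1 := lam (rshift k'.+1 (@ord0 m')) in
  let c : R := 1 / 32 in
  let Delta := (lamk - 2 * Num.sqrt beta) / lamk in
  let E t := invmx Lk *m (Uk^T *m Xi t) *m invmx (Uk^T *m X t) in
  let Ginv := fix Ginv t := match t with
      | 0 => 2^-1%:M + E 0
      | t.+1 => 1%:M - beta *: (invmx Lk *m invmx (Ginv t) *m invmx Lk) + E t.+1
      end in
  let G t := invmx (Ginv t) in
  let Xprev t := match t with 0 => (2 * beta)^-1 *: (A *m X 0) | t.+1 => X t end in
  let Rcur t := match t with 0 => 1%:M | t.+1 => Rq t.+1 end in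
  (* A symmetric PSD with eigenpairs (lam i, col i U), orthonormal eigenvectors *)
  A^T = A ->
  U^T *m U = 1%:M ->
  (forall i, A *m col i U = lam i *: col i U) ->
  (forall i j : 'I_(k'.+1 + m'.+1), (i <= j)%N -> lam j <= lam i) ->
  (forall i, 0 <= lam i) ->
  lamk > lamk1 ->
  0 < beta ->
  lamk > 2 * Num.sqrt beta -> 2 * Num.sqrt beta >= lamk1 ->
  stiefel (X 0) ->
  cos (theta_k Uk (X 0)) > 0 ->
  (* ANPM iteration *)
  Y 1%N = 2^-1 *: (A *m X 0) + Xi 0%N ->
  (forall t, (1 <= t)%N ->
     Y t.+1 = A *m X t - beta *: (X t.-1 *m invmx (Rq t)) + Xi t) ->
  (forall t, (1 <= t)%N -> is_QR (Y t) (X t) (Rq t)) ->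
  (* perturbation condition *)
  (forall t, specnorm (Uk^T *m Xi t) <= c * (lamk - 2 * Num.sqrt beta) * cos (theta_k Uk (X t))) ->
  forall t : nat,
  [/\ Uk^T *m X t \in unitmx,
      Ginv t \in unitmx,
      \rank (Uk^T *m Y t.+1) = k'.+1,
      \rank (Y t.+1) = k'.+1 &
   [/\ specnorm (G t) <= 1 / (2^-1 - c * Delta),
      G t = invmx (1%:M - beta *: (invmx Lk *m (Uk^T *m Xprev t) *m invmx (Uk^T *m X t *m Rcur t)) + E t)
    & Uk^T *m Y t.+1 = Lk *m invmx (G t) *m (Uk^T *m X t)]].
Proof.
move=> Uk Lk lamk lamk1 c Delta E Ginv G Xprev Rcur Asym _ eigen lam_mono _ _ beta_gt0 lamk_gt _ _
  cos_X0 Y1 YS QR Xi_small.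
have UkA : Uk^T *m A = Lk *m Uk^T.
  by apply: eigencols_trmx_mulmx => // j; rewrite col_lsubmx eigen mxE.
have lamk_le i : lamk <= (\row_i lam (lshift m'.+1 i)) 0 i.
  by rewrite mxE; apply: lam_mono; rewrite /= -ltnS.
apply: anpm_properties UkA lamk_le beta_gt0 lamk_gt _ _ cos_X0 Y1 YS QR Xi_small; rewrite /c; lra.
Qed.
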